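(* Let $k\ge 2$ and let $f\in\mathcal{GB}_n^{2^k}$ be given by $f(\mathbf{x})=g(\mathbf{x})+2h(\mathbf{x})$ with $g\in\mathcal{B}_n$ and $h\in\mathcal{GB}_n^{2^{k-1}}$. Consider the statements (i) $f$ is gbent in $\mathcal{GB}_n^{2^k}$; (ii) $h$ and $h+2^{k-2}g$ are both gbent in $\mathcal{GB}_n^{2^{k-1}}$, and $\Im\big(\overline{\mathcal{H}^{(2^{k-1})}_h(\mathbf{u})}\,\mathcal{H}^{(2^{k-1})}_{h+2^{k-2}g}(\mathbf{u})\big)=0$ for all $\mathbf{u}\in\mathbb{F}_2^n$. If $n$ is even, (i) and (ii) are equivalent. If $n$ is odd, (ii) implies (i).
   Context: $\mathcal{B}_n$: Boolean functions $\mathbb{F}_2^n\to\mathbb{F}_2$; $\mathcal{GB}_n^q$: functions $\mathbb{F}_2^n\to\mathbb{Z}_q$ (Boolean values viewed as integers; $g+2h$ computed in $\mathbb{Z}_{2^k}$, $h+2^{k-2}g$ in $\mathbb{Z}_{2^{k-1}}$). $\mathcal{H}^{(q)}_f(\mathbf{u})=\sum_{\mathbf{x}\in\mathbb{F}_2^n}\zeta_q^{f(\mathbf{x})}(-1)^{\mathbf{u}\cdot\mathbf{x}}$ with $\zeta_q=e^{2\pi i/q}$ (for $q=2$ this is the ordinary Walsh–Hadamard transform); $f\in\mathcal{GB}_n^q$ is gbent if $|\mathcal{H}^{(q)}_f(\mathbf{u})|=2^{n/2}$ for all $\mathbf{u}$ (for $q=2$: bent). $\Im(z)$ is the imaginary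 part and $\bar z$ the complex conjugate. *)

From HB Require Import structures.
From mathcomp Require Import all_boot all_order all_algebra all_field.
Set Implicit Arguments. Unset Strict Implicit. Unset Printing Implicit Defensive.
Import Order.TTheory GRing.Theory Num.Theory.
Local Open Scope ring_scope.

Definition BV (n : nat) := {ffun 'I_n -> bool}.

Definition dotF2 n (u x : BV n) : bool := odd (\sum_(i < n) (u i && x i))%N.

(* zeta_q = e^{2 pi i / q} for even q: (q/2).-root (-1) is e^{i pi/(q/2)}
   (n.-root picks the root of minimal nonnegative argument). Only used for
   q = 2^m with m >= 1. *)
Definition zeta (q : nat) : algC := (q./2).-root (-1).

Definition WH n q (f : BV n -> 'I_q) (u : BV n) : algC :=
  \sum_(x : BV n) zeta q ^+ (f x) * (-1) ^+ (dotF2 u x).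

Definition gbent n q (f : BV n -> 'I_q) : Prop :=
  forall u : BV n, `|WH f u| = sqrtC (2%:R ^+ n).

From HB Require Import structures.
From mathcomp Require Import all_boot all_order all_algebra all_field.
From mathcomp Require Import ring zify.

(* Split every Walsh sum along g: with S0 and S1 the sums of
   zeta_(2^(k-1))^h(x) (-1)^(u.x) over g(x) = 0 and g(x) = 1, one has
   H_h = S0 + S1, H_(h + 2^(k-2) g) = S0 - S1 and H_f = S0 + zeta_(2^k) S1.
   The conditions |S0 + S1| = |S0 - S1| and Im(conj(S0 + S1)(S0 - S1)) = 0 say
   exactly that S0 conj(S1) = 0, so under (ii) one of S0, S1 vanishes and
   |H_f| = |H_h|.  Conversely, for n even, x = H_f(u) lies in Z[zeta] with
   x conj(x) = 4^(n/2).  In Z[zeta] the prime pi = 1 - zeta satisfies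
   (2) = (pi)^(2^(k-1)), and descending along pi shows x = 2^(n/2) w with
   w conj(w) = 1, so w = +-zeta^i.  As S0 lies in the span of the even and
   zeta S1 in the span of the odd powers of zeta, one of them is zero. *)

Set Implicit Arguments.
Unset Strict Implicit.
Unset Printing Implicit Defensive.
Import Order.TTheory GRing.Theory Num.Theory.
Local Open Scope ring_scope.

(** * Roots of -1 in algC *)

Lemma ReIm_sqr (x : algC) :
  'Re (x ^+ 2) = 'Re x ^+ 2 - 'Im x ^+ 2 /\ 'Im (x ^+ 2) = 2 * 'Re x * 'Im x.
Proof.
have := mulC_rect ('Re x) ('Im x) ('Re x) ('Im x); rewrite -Crect -expr2 => ->.
rewrite Re_rect ?Im_rect ?rpredD ?rpredN ?rpredM ?Creal_Re ?Creal_Im //.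
by split; [rewrite !expr2 | rewrite -mulrA mulr_natl mulr2n].
Qed.

Lemma Re_sqr_norm1 (x : algC) : `|x| = 1 -> 'Re (x ^+ 2) = 2 * 'Re x ^+ 2 - 1.
Proof.
move=> x1; have := normC2_Re_Im x; rewrite x1 expr1n => Ex.
rewrite (ReIm_sqr x).1.
have -> : 'Im x ^+ 2 = 1 - 'Re x ^+ 2 by rewrite Ex addrC addKr.
ring.
Qed.

Lemma norm_eq1_of_exprN1 (x : algC) p : (0 < p)%N -> x ^+ p = -1 -> `|x| = 1.
Proof.
move=> p_gt0 xp; apply/eqP; rewrite -(pexpr_eq1 (n := p)) ?normr_ge0 //.
by rewrite -normrX xp normrN normr1.
Qed.

Lemma Re_sqrtC_ge0 (x : algC) : 0 <= 'Im x -> 0 <= 'Re (sqrtC x).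
Proof.
set s := sqrtC x => Ix; have Is : 0 <= 'Im s by apply: Im_rootC_ge0.
have [/Creal_ImP s_real | Is_neq0] := eqVneq ('Im s) 0.
  have s_ge0 : 0 <= s by rewrite sqrtC_ge0 -(sqrtCK x) -/s real_exprn_even_ge0.
  by rewrite (Creal_ReP _ s_real).
have Is_gt0 : 0 < 'Im s by rewrite lt_def Is_neq0.
rewrite -(pmulr_lge0 _ Is_gt0) -(pmulr_rge0 _ (ltr0Sn _ 1)) mulrA.
by rewrite -(ReIm_sqr s).2 sqrtCK.
Qed.

Lemma eq_norm1_Re (x y : algC) : `|x| = 1 -> `|y| = 1 ->
  0 <= 'Im x -> 0 <= 'Im y -> 'Re x = 'Re y -> x = y.
Proof.
move=> x1 y1 Ix Iy ERe; suff EIm : 'Im x = 'Im y by rewrite [x]Crect [y]Crect ERe EIm.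
apply/eqP; rewrite -(eqrXn2 (n := 2)) //; apply/eqP.
have := normC2_Re_Im x; have := normC2_Re_Im y.
by rewrite x1 y1 ERe => -> /addrI.
Qed.

(* n.-root (-1) has the largest real part among the n-th roots of -1 in the
   closed upper half plane (rootC_Re_max), and on the upper unit half circle a
   point is determined by its real part; so compare real parts both ways, going
   through s = sqrtC w, a (2m)-th root of -1 with 0 <= 'Re s. *)
Lemma sqr_rootCN1_double m :
  (0 < m)%N -> ((m.*2).-root (-1 : algC)) ^+ 2 = m.-root (-1).
Proof.
move=> m_gt0; have [m_gt1 | m_le1] := ltnP 1 m; last first.
  have -> : m = 1%N by lia.
  by rewrite root1C rootCK.
set z := _.-root _; set w := m.-root _; set s := sqrtC w.
have m2_gt0 : (0 < m.*2)%N by rewrite double_gt0.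
have m2_gt1 : (1 < m.*2)%N by rewrite -addnn ltn_addl.
have wm : w ^+ m = -1 by rewrite rootCK.
have sm : s ^+ m.*2 = -1 by rewrite -mul2n exprM sqrtCK.
have z1 := norm_eq1_of_exprN1 m2_gt0 (rootCK m2_gt0 (-1)).
have w1 := norm_eq1_of_exprN1 m_gt0 wm.
have s1 := norm_eq1_of_exprN1 m2_gt0 sm.
have Iz : 0 <= 'Im z by apply: Im_rootC_ge0.
have Iw : 0 <= 'Im w by apply: Im_rootC_ge0.
have Rs_ge0 : 0 <= 'Re s by apply: Re_sqrtC_ge0.
have Rsz : 'Re s <= 'Re z by apply: rootC_Re_max; rewrite // Im_rootC_ge0.
have Rz_ge0 := le_trans Rs_ge0 Rsz.
have Iz2 : 0 <= 'Im (z ^+ 2) by rewrite (ReIm_sqr z).2 !mulr_ge0.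
apply: eq_norm1_Re; rewrite ?normrX ?z1 ?expr1n //.
apply/le_anti/andP; split.
  by apply: rootC_Re_max => //; rewrite -exprM mul2n rootCK.
have -> : w = s ^+ 2 by rewrite sqrtCK.
rewrite !Re_sqr_norm1 // lerD2r ler_pM2l ?ltr0Sn //.
by rewrite !expr2 ler_pM.
Qed.

Section ComplexOrthogonality.

Variable C : numClosedFieldType.
Implicit Types a b u : C.

Lemma Im_conj_mul_self a : 'Im (a^* * a) = 0.
Proof. by apply/Creal_ImP; rewrite mulrC -normCK rpredX ?normr_real. Qed.

(* |a + b| = |a - b| says that Re (a b^* ) = 0, and the condition on the
   imaginary part says that Im (a b^* ) = 0. *)
Lemma sum_diff_orthogonalP a b :
  `|a + b| = `|a - b| /\ 'Im ((a + b)^* * (a - b)) = 0 <-> a = 0 \/ b = 0.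
Proof.
split=> [[Enorm /Creal_ImP] | [-> | ->]]; last first.
- by rewrite addr0 subr0 Im_conj_mul_self.
- by rewrite add0r sub0r normrN mulrN raddfN /= Im_conj_mul_self oppr0.
rewrite CrealE rmorphM /= conjCK => /eqP Ereal.
move/(congr1 (fun x => x ^+ 2)): Enorm; rewrite !normCK => Enorm.
have : 4 * (a * b^*) = 0.
  have -> : 4 * (a * b^*) = (a + b) * (a + b)^* - (a - b) * (a - b)^*
                           + ((a + b)^* * (a - b) - (a + b) * (a - b)^*).
    by rewrite !rmorphB !rmorphD /=; ring.
  by rewrite Enorm Ereal !subrr addr0.
by move/eqP; rewrite !mulf_eq0 pnatr_eq0 conjC_eq0 /= => /orP[]/eqP; [left | right].
Qed.

Lemma norm_add_unit_mul a b u : `|u| = 1 -> a = 0 \/ b = 0 ->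
  `|a + u * b| = `|a + b|.
Proof. by move=> u1 [-> | ->]; rewrite ?add0r ?normrM ?u1 ?mul1r // !mulr0 !addr0. Qed.

End ComplexOrthogonality.

Lemma prim_root_pow2 (R : numDomainType) (x : R) m :
  x ^+ (2 ^ m) = -1 -> (2 ^ m.+1).-primitive_root x.
Proof.
move=> xN1; have x_order : x ^+ (2 ^ m.+1) = 1.
  by rewrite expnS mulnC exprM xN1 sqrrN expr1n.
have [d d_prim /(dvdn_pfactor _ _ (isT : prime 2))[e]] :=
  prim_order_exists (expn_gt0 2 m.+1) x_order.
rewrite leq_eqVlt ltnS => /orP[/eqP-> d_pow2 | le_e_m d_pow2]; first by rewrite -d_pow2.
move: d_prim; rewrite d_pow2 => /prim_order_dvd/(_ (2 ^ m)%N).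
by rewrite dvdn_exp2l // xN1 eqNr oner_eq0.
Qed.

Lemma zeta_pow2E m : zeta (2 ^ m.+1) = (2 ^ m).-root (-1).
Proof. by rewrite /zeta expnS mul2n doubleK. Qed.

Lemma zeta_pow2_half m : zeta (2 ^ m.+1) ^+ (2 ^ m) = -1.
Proof. by rewrite zeta_pow2E rootCK ?expn_gt0. Qed.

Lemma zeta_pow2_prim m : (2 ^ m.+1).-primitive_root (zeta (2 ^ m.+1)).
Proof. exact/prim_root_pow2/zeta_pow2_half. Qed.

Lemma zeta_pow2_mod m i : zeta (2 ^ m.+1) ^+ (i %% 2 ^ m.+1) = zeta (2 ^ m.+1) ^+ i.
Proof. exact/expr_mod/prim_expr_order/zeta_pow2_prim. Qed.

Lemma sqr_zeta_pow2 m : zeta (2 ^ m.+2) ^+ 2 = zeta (2 ^ m.+1).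
Proof. by rewrite !zeta_pow2E expnS mul2n sqr_rootCN1_double ?expn_gt0. Qed.

(** * The ring Z[z] for a primitive 2^(m+2)-th root of unity z *)

Section TwoPowerCyclotomicIntegers.

Variables (m : nat) (z : algC).
Hypothesis z_prim : (2 ^ m.+2).-primitive_root z.

Local Notation N := (2 ^ m.+1)%N.
Local Notation pi := (1 - z).

Let N_gt0 : (0 < N)%N. Proof. by rewrite expn_gt0. Qed.

Lemma expr_zN : z ^+ N = -1.
Proof.
have zN_neq1 : z ^+ N != 1.
  by rewrite -(expr0 z) (eq_prim_root_expr z_prim) mod0n modn_small ?ltn_exp2l
     ?expn_eq0.
have /eqP := prim_expr_order z_prim; rewrite expnSr exprM sqrf_eq1.
by rewrite (negbTE zN_neq1) => /eqP.
Qed.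

Lemma expr_z_mod i : z ^+ i = z ^+ (i %% N) *~ (-1) ^+ (i %/ N).
Proof.
rewrite {1}(divn_eq i N) exprD mulnC exprM expr_zN mulrC -mulrzr.
by rewrite rmorphXn /= rmorphN1.
Qed.

Lemma norm_z : `|z| = 1. Proof. exact: norm_eq1_of_exprN1 N_gt0 expr_zN. Qed.

Lemma z_neq0 : z != 0.
Proof. by rewrite -normr_eq0 norm_z oner_eq0. Qed.

Lemma conj_z : z^* = z ^+ (2 ^ m.+2).-1.
Proof.
apply: (mulfI z_neq0); rewrite -exprS prednK ?expn_gt0 // prim_expr_order //.
by rewrite -normCK norm_z expr1n.
Qed.

Definition zcomb (c : nat -> int) : algC := \sum_(i < N) z ^+ i *~ c i.

(* [1, z, ..., z^(N-1)] is a Q-basis of Q(z) since the cyclotomic polynomial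
   of order 2N has degree totient (2N) = N. *)
Lemma zcomb_eq0 c : zcomb c = 0 -> forall i, (i < N)%N -> c i = 0.
Proof.
move=> c0; pose p : {poly rat} := \poly_(i < N) (c i)%:~R.
have [p0 [Dp0 _] dvd_p0] := minCpolyP z.
have size_p0 : size p0 = N.+1.
  rewrite -(size_map_poly (ratr : {rmorphism rat -> algC})) -Dp0.
  by rewrite (minCpoly_cyclotomic z_prim) size_cyclotomic totient_pfactor // mul1n.
have root_p : root (map_poly ratr p) z.
  apply/eqP; rewrite (horner_coef_wide _ (n := N)); last first.
    by rewrite size_map_poly size_poly.
  rewrite -[RHS]c0; apply: eq_bigr => i _.
  by rewrite coef_map coef_poly ltn_ord /= ratr_int mulrzl.
have p_eq0 : p = 0.
  apply: contraTeq (isT : true) => p_neq0; rewrite dvd_p0 in root_p.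
  by have := dvdp_leq p_neq0 root_p; rewrite size_p0 leqNgt ltnS size_poly.
move=> i lt_iN; have /eqP := congr1 (fun q : {poly rat} => q`_i) p_eq0.
by rewrite coef_poly lt_iN coef0 intr_eq0 => /eqP.
Qed.

Definition zspan (P : pred nat) (x : algC) :=
  exists2 c, (forall i, ~~ P i -> c i = 0) & x = zcomb c.

(* Since z^N = -1, [zspan predT] is the ring Z[z]. *)
Local Notation zint := (zspan predT).

Lemma zspan0 P : zspan P 0.
Proof. by exists (fun=> 0) => //; rewrite /zcomb big1 // => i _; rewrite mulr0z. Qed.

Lemma zspanD P x y : zspan P x -> zspan P y -> zspan P (x + y).
Proof.
move=> [c Pc ->] [d Pd ->]; exists (fun i => c i + d i).
  by move=> i Pi; rewrite Pc ?Pd.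
by rewrite /zcomb -big_split; apply: eq_bigr => i _; rewrite mulrzDr.
Qed.

Lemma zspanMz P x a : zspan P x -> zspan P (x *~ a).
Proof.
move=> [c Pc ->]; exists (fun i => c i * a).
  by move=> i Pi; rewrite Pc ?mul0r.
by rewrite /zcomb mulrz_suml; apply: eq_bigr => i _; rewrite mulrzA.
Qed.

Lemma zspanN P x : zspan P x -> zspan P (- x).
Proof. by move=> Px; rewrite -mulrN1z; apply: zspanMz. Qed.

Lemma zspanB P x y : zspan P x -> zspan P y -> zspan P (x - y).
Proof. by move=> Px Py; apply: zspanD => //; apply: zspanN. Qed.

Lemma zspanMsign P x (b : bool) : zspan P x -> zspan P (x * (-1) ^+ b).
Proof. by case: b; rewrite ?expr0 ?expr1 ?mulr1 ?mulrN1 //; apply: zspanN. Qed.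

Lemma zspan_sum P I r (Q : pred I) (F : I -> algC) :
  (forall i, Q i -> zspan P (F i)) -> zspan P (\sum_(i <- r | Q i) F i).
Proof. by move=> PF; apply: big_ind => //; [apply: zspan0 | apply: zspanD]. Qed.

Lemma zspanW (P Q : pred nat) x : (forall i, P i -> Q i) -> zspan P x -> zspan Q x.
Proof. by move=> PQ [c Pc ->]; exists c => // i /(contra (PQ i)); apply: Pc. Qed.

Lemma zspan_expr (P : pred nat) i : P (i %% N)%N -> zspan P (z ^+ i).
Proof.
move=> Pi; exists (fun l => if l == (i %% N)%N then (-1) ^+ (i %/ N) else 0).
  by move=> l; case: eqP => // -> /negP.
rewrite /zcomb (bigD1 (Ordinal (ltn_pmod i N_gt0))) //= eqxx -expr_z_mod.
by rewrite big1 ?addr0 // => l /negbTE; rewrite -val_eqE /= => ->; rewrite mulr0z.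
Qed.

Lemma zspan_int (P : pred nat) a : P 0%N -> zspan P a%:~R.
Proof.
move=> P0; rewrite -[a%:~R]mulr1 mulrzl -(expr0 z).
by apply: zspanMz; apply: zspan_expr; rewrite mod0n.
Qed.

Lemma zspan_expr_parity i : zspan (fun l => odd l == odd i) (z ^+ i).
Proof. by apply: zspan_expr; rewrite odd_mod ?oddX. Qed.

Lemma zint_expr i : zint (z ^+ i). Proof. exact: zspan_expr. Qed.

Lemma zint_int a : zint a%:~R. Proof. exact: zspan_int. Qed.

Lemma zint1 : zint 1. Proof. exact: (zint_int 1). Qed.

Lemma zint_nat i : zint i%:R. Proof. exact: (zint_int i). Qed.

Lemma zintM x y : zint x -> zint y -> zint (x * y).
Proof.
move=> [c _ ->] [d _ ->]; rewrite /zcomb mulr_suml; apply: zspan_sum => i _.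
rewrite mulr_sumr; apply: zspan_sum => l _.
by rewrite mulrzAl mulrzAr -exprD; do 2 apply: zspanMz; apply: zint_expr.
Qed.

Lemma zintX x i : zint x -> zint (x ^+ i).
Proof.
by move=> x_int; elim: i => [|i]; [apply: zint1 | rewrite exprS; apply: zintM].
Qed.

Lemma zint_conj x : zint x -> zint x^*.
Proof.
move=> [c _ ->]; rewrite /zcomb rmorph_sum; apply: zspan_sum => i _.
by rewrite rmorphMz rmorphXn /= conj_z -exprM; apply: zspanMz; apply: zint_expr.
Qed.

Definition zdvd (a x : algC) := exists2 r, zint r & x = a * r.

Lemma zdvd_mulr a r : zint r -> zdvd a (a * r).
Proof. by exists r. Qed.

Lemma zdvdD a x y : zdvd a x -> zdvd a y -> zdvd a (x + y).
Proof.
by move=> [r r_int ->] [s s_int ->]; rewrite -mulrDr; exists (r + s); first apply: zspanD.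
Qed.

Lemma zdvdMr a x y : zint y -> zdvd a x -> zdvd a (x * y).
Proof.
by move=> y_int [r r_int ->]; rewrite -mulrA; exists (r * y); first apply: zintM.
Qed.

Lemma zdvdMz a x b : zdvd a x -> zdvd a (x *~ b).
Proof. by move=> adx; rewrite -mulrzr; apply: zdvdMr adx; apply: zint_int. Qed.

Lemma zdvd_sum a I r (Q : pred I) (F : I -> algC) :
  (forall i, Q i -> zdvd a (F i)) -> zdvd a (\sum_(i <- r | Q i) F i).
Proof.
move=> aF; apply: big_ind => //; last exact: zdvdD.
by exists 0; rewrite ?mulr0 //; apply: zspan0.
Qed.

Lemma zdvd_trans a b x : zdvd a b -> zdvd b x -> zdvd a x.
Proof.
by move=> [r r_int ->] [s s_int ->]; rewrite -mulrA; apply: zdvd_mulr; apply: zintM.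
Qed.

Lemma zdvd_sub1X x i : zint x -> zdvd (1 - x) (1 - x ^+ i).
Proof.
move=> x_int; exists (\sum_(l < i) x ^+ l); last by rewrite -opprB subrX1 -mulNr opprB.
by apply: zspan_sum => l _; apply: zintX.
Qed.

Lemma zint_pi : zint pi.
Proof. by apply: zspanB; [apply: zint1 | rewrite -(expr1 z); apply: zint_expr]. Qed.

Lemma zdvd_piX2_sub1X e : (e <= m.+1)%N -> zdvd (pi ^+ (2 ^ e)) (1 - z ^+ (2 ^ e)).
Proof.
elim: e => [_ | e IHe le_e].
  by rewrite expn0 !expr1 -[X in zdvd _ X]mulr1; apply: zdvd_mulr; apply: zint1.
have [r r_int Er] := IHe (ltnW le_e).
have [s s_int Es] := zdvd_sub1X (2 ^ (m.+1 - e)).+1 (zint_expr (2 ^ e)).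
have Eadd : 1 + z ^+ (2 ^ e) = 1 - (z ^+ (2 ^ e)) ^+ (2 ^ (m.+1 - e)).+1.
  by rewrite -exprM mulnS -expnD subnKC ?(ltnW le_e) // exprD expr_zN mulrN1 opprK.
exists (r ^+ 2 * s); first by apply: zintM => //; apply: zintX.
rewrite expnS mul2n -addnn !exprD.
have -> : 1 - z ^+ (2 ^ e) * z ^+ (2 ^ e) = (1 - z ^+ (2 ^ e)) * (1 + z ^+ (2 ^ e)).
  by ring.
by rewrite Eadd Es Er; ring.
Qed.

Lemma zdvd_piX_2 : zdvd (pi ^+ N) 2.
Proof. by have := zdvd_piX2_sub1X (leqnn m.+1); rewrite expr_zN opprK. Qed.

Lemma zdvd_pi_2 : zdvd pi 2.
Proof.
apply: zdvd_trans zdvd_piX_2.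
by rewrite -(prednK N_gt0) exprS; apply: zdvd_mulr; apply: zintX; apply: zint_pi.
Qed.

(* Squaring modulo 2 shows that pi^(2^e) = 1 + z^(2^e) (mod 2); for e = m+1
   the right-hand side is 0. *)
Lemma zdvd_2_piX : zdvd 2 (pi ^+ N).
Proof.
suff /(_ m.+1) : forall e, zdvd 2 (pi ^+ (2 ^ e) - (1 + z ^+ (2 ^ e))).
  by rewrite expr_zN addrN subr0.
elim=> [|e [q q_int Eq]].
  exists (- z); first by apply: zspanN; rewrite -(expr1 z); apply: zint_expr.
  by rewrite expn0 !expr1; ring.
exists (z ^+ (2 ^ e) + 2 * (1 + z ^+ (2 ^ e)) * q + 2 * q ^+ 2).
  have two_int : zint 2 := zint_nat 2.
  apply: zspanD; first apply: zspanD; first exact: zint_expr.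
    by do 2 apply: zintM => //; apply: zspanD; [apply: zint1 | apply: zint_expr].
  by apply: zintM => //; apply: zintX.
move/(canRL (subrK _)): Eq => Eq.
by rewrite expnS mul2n -addnn !exprD Eq; ring.
Qed.

Lemma zint_Aint x : zint x -> x \in Aint.
Proof.
move=> [c _ ->]; apply: rpred_sum => i _; apply/rpredMz/rpredX.
exact: Aint_prim_root z_prim.
Qed.

Lemma not_zdvd_2_1 : ~ zdvd 2 1.
Proof.
have two_neq0 : (2 : algC) != 0 by rewrite pnatr_eq0.
move=> [r /zint_Aint r_Aint E1].
have Er : r = 2^-1 by rewrite -(mulKf two_neq0 r) -E1 mulr1.
have /intrP[a Ea] : r \in Num.int by rewrite Cint_rat_Aint // Er rpredV rpred_nat.
suff : 2 * a = 1 by lia.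
by apply: (@intr_inj algC); rewrite intrM -Ea rmorph1 [RHS]E1.
Qed.

Lemma not_zdvd_pi_1 : ~ zdvd pi 1.
Proof.
move=> [r r_int E1]; apply: not_zdvd_2_1.
apply: zdvd_trans zdvd_2_piX _.
by exists (r ^+ N); [apply: zintX | rewrite -exprMn -E1 expr1n].
Qed.

Lemma zdvd_pi_subr_expr1 i : zdvd pi (z ^+ i - 1).
Proof.
have [r r_int] := zdvd_sub1X i (zint_expr 1); rewrite !expr1 => Er.
by exists (- r); [apply: zspanN | rewrite mulrN -Er opprB].
Qed.

Lemma zint_mod_pi x : zint x -> exists b : bool, zdvd pi (x - b%:R).
Proof.
move=> [c _ ->]; set t := \sum_(i < N) c i.
have pi_dvd_x_t : zdvd pi (zcomb c - t%:~R).
  rewrite /zcomb /t rmorph_sum -sumrB; apply: zdvd_sum => i _.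
  by rewrite /= -mulrzBl; apply/zdvdMz/zdvd_pi_subr_expr1.
have [b Et] : exists b : bool, t%:~R = (t %/ 2)%Z%:~R * 2 + b%:R :> algC.
  have : (t %% 2 = 0 \/ t %% 2 = 1)%Z.
    by have := @modz_ge0 t 2 isT; have := @ltz_pmod t 2 isT; lia.
  by case=> Et2; [exists false | exists true];
    rewrite {1}(divz_eq t 2) Et2 intrD intrM ?addr0.
exists b; rewrite -[zcomb c](subrK t%:~R) -addrA; apply: zdvdD => //.
by rewrite Et addrK mulrC; apply: zdvdMr zdvd_pi_2; apply: zint_int.
Qed.

Lemma zdvd_pi_subr1M x y :
  zint y -> zdvd pi (x - 1) -> zdvd pi (y - 1) -> zdvd pi (x * y - 1).
Proof.
move=> y_int pi_dvd_x pi_dvd_y.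
have -> : x * y - 1 = (x - 1) * y + (y - 1) by ring.
by apply: zdvdD => //; apply: zdvdMr.
Qed.

Lemma z_mul_conj : z * z^* = 1.
Proof. by rewrite -normCK norm_z expr1n. Qed.

Lemma conj_pi : pi^* = pi * - z^*.
Proof. by rewrite rmorphB rmorph1 mulrN mulrBl mul1r z_mul_conj opprB. Qed.

Lemma zdvd_pi_subr1X x i : zint x -> zdvd pi (x - 1) -> zdvd pi (x ^+ i - 1).
Proof.
move=> x_int pi_dvd_x; elim: i => [|i IHi]; last first.
  by rewrite exprS; apply: zdvd_pi_subr1M => //; apply: zintX.
by rewrite subrr; exists 0; [apply: zspan0 | rewrite mulr0].
Qed.

Lemma zint_Nconj_z : zint (- z^*).
Proof. by apply: zspanN; rewrite -(expr1 z); apply: zint_conj; apply: zint_expr. Qed.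

Lemma zdvd_pi_subr1_conj x : zdvd pi (x - 1) -> zdvd pi (x^* - 1).
Proof.
move=> [r r_int Er]; exists (- z^* * r^*).
  by apply: zintM; [apply: zint_Nconj_z | apply: zint_conj].
have -> : x^* - 1 = (x - 1)^* by rewrite rmorphB /= conjC1.
by rewrite Er rmorphM /= conj_pi mulrA.
Qed.

Lemma zdvd_pi_Nconj_z : zdvd pi (- z^* - 1).
Proof.
have -> : - z^* - 1 = (z ^+ (2 ^ m.+2).-1 - 1 + 2) * -1 by rewrite conj_z; ring.
apply: zdvdMr; first exact: zint_int (-1).
by apply: zdvdD; [apply: zdvd_pi_subr_expr1 | apply: zdvd_pi_2].
Qed.

Lemma pi_neq0 : pi != 0.
Proof.
rewrite subr_eq0 eq_sym; apply/eqP => z1.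
by move: expr_zN; rewrite z1 expr1n => /eqP; rewrite eq_sym eqNr oner_eq0.
Qed.

Lemma zdvd_pi_norm_sub1 u a :
  zint u -> zdvd pi (u - 1) -> zdvd pi (u * u^* * (- z^*) ^+ a - 1).
Proof.
move=> u_int pi_dvd_u; apply: zdvd_pi_subr1M; first by apply: zintX; apply: zint_Nconj_z.
  by apply: zdvd_pi_subr1M; [apply: zint_conj | | apply: zdvd_pi_subr1_conj].
by apply: zdvd_pi_subr1X; [apply: zint_Nconj_z | apply: zdvd_pi_Nconj_z].
Qed.

(* The norm of pi^a u is pi^(2a) times an element that is 1 mod pi, whereas
   4 y is divisible by pi^(2N). *)
Lemma norm_piX_unit_neq a u y : (a < N)%N -> zint u -> zdvd pi (u - 1) ->
  zint y -> (pi ^+ a * u) * (pi ^+ a * u)^* != 4 * y.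
Proof.
move=> lt_aN u_int pi_dvd_u y_int; apply/eqP => Enorm.
pose w := u * u^* * (- z^*) ^+ a.
have pi_dvd_w : zdvd pi (w - 1) by apply: zdvd_pi_norm_sub1.
have [s s_int Es] := zdvd_piX_2.
have E1 : (pi ^+ a * u) * (pi ^+ a * u)^* = pi ^+ (a + a) * w.
  by rewrite rmorphM rmorphXn /= conj_pi /w exprMn exprD; ring.
have E2 : 4 * y = pi ^+ (a + a) * (pi ^+ (N - a).*2 * s ^+ 2 * y).
  have eN : (a + a + (N - a).*2 = N + N)%N by rewrite -addnn; lia.
  have -> : (4 : algC) = 2 * 2 by rewrite -natrM.
  by rewrite 2!mulrA -exprD eN exprD Es; ring.
have {Enorm E1 E2} Ew : w = pi * (pi ^+ (N - a).*2.-1 * s ^+ 2 * y).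
  apply: (mulfI (expf_neq0 (a + a) pi_neq0)); rewrite -E1 Enorm E2; congr (_ * _).
  by rewrite !mulrA -exprS prednK // double_gt0 subn_gt0.
apply: not_zdvd_pi_1; rewrite [X in zdvd _ X](_ : 1 = w + (w - 1) * -1); last by ring.
apply: zdvdD; last by apply: zdvdMr pi_dvd_w; apply: zint_int (-1).
rewrite Ew; apply: zdvd_mulr; apply: zintM => //.
by apply: zintM; apply: zintX => //; apply: zint_pi.
Qed.

Lemma zdvd_piX_of_norm_dvd4 x y a : zint x -> zint y -> x * x^* = 4 * y ->
  (a <= N)%N -> zdvd (pi ^+ a) x.
Proof.
move=> x_int y_int Ex; elim: a => [_ | a IHa lt_aN].
  by exists x; rewrite ?expr0 ?mul1r.
have [u u_int Eu] := IHa (ltnW lt_aN).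
have [[] pi_dvd_u] := zint_mod_pi u_int.
  by have := norm_piX_unit_neq lt_aN u_int pi_dvd_u y_int; rewrite -Eu Ex eqxx.
have [r r_int Er] := pi_dvd_u; exists r => //.
by rewrite Eu exprSr -mulrA -Er subr0.
Qed.

Lemma zdvd_2_of_norm_dvd4 x y : zint x -> zint y -> x * x^* = 4 * y -> zdvd 2 x.
Proof.
move=> x_int y_int Ex; apply: zdvd_trans zdvd_2_piX _.
exact: zdvd_piX_of_norm_dvd4 x_int y_int Ex (leqnn N).
Qed.

Lemma norm_eq_4X e x : zint x -> x * x^* = 4 ^+ e ->
  exists2 w, zint w & x = 2 ^+ e * w /\ w * w^* = 1.
Proof.
elim: e x => [|e IHe] x x_int Ex; first by exists x; rewrite ?expr0 ?mul1r.
have [x' x'_int Ex'] :=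
  zdvd_2_of_norm_dvd4 x_int (zintX e (zint_nat 4)) (etrans Ex (exprS _ _)).
have four_neq0 : (4 : algC) != 0 by rewrite pnatr_eq0.
have Enorm' : x' * x'^* = 4 ^+ e.
  apply: (mulfI four_neq0); rewrite -exprS -Ex Ex' rmorphM /= conjC_nat.
  by rewrite (_ : 4 = 2 * 2) -?natrM //; ring.
have [w w_int [Ew w_unit]] := IHe x' x'_int Enorm'.
by exists w; rewrite // Ex' Ew exprS mulrA.
Qed.

Lemma zspan_disjoint_eq0 (P Q : pred nat) x y : (forall i, P i -> ~~ Q i) ->
  zspan P x -> zspan Q y -> x + y = 0 -> x = 0.
Proof.
move=> PQ [c Pc ->] [d Qd ->] Exy.
have cd0 : zcomb (fun i => c i + d i) = 0.
  by rewrite -Exy /zcomb -big_split; apply: eq_bigr => i _; rewrite mulrzDr.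
rewrite /zcomb big1 // => i _; suff -> : c i = 0 by rewrite mulr0z.
have [Pi | /Pc //] := boolP (P i).
by have := zcomb_eq0 cd0 (ltn_ord i); rewrite (Qd i (PQ i Pi)) addr0.
Qed.

Let exponent_conj_prod_neq0 i l : (i < N)%N -> (l < N)%N -> i != l ->
  ((i + (2 ^ m.+2).-1 * l) %% N != 0)%N.
Proof.
move=> lt_iN lt_lN; apply: contraNneq => E0.
have <- : ((i + (2 ^ m.+2).-1 * l + l) %% N = l)%N by rewrite -modnDml E0 modn_small.
rewrite -addnA -mulSnr prednK ?expn_gt0 // expnSr -mulnA.
by rewrite addnC mulnC modnMDl modn_small.
Qed.

Lemma zcomb_norm_sub c :
  zspan (predC1 0%N) (zcomb c * (zcomb c)^* - (\sum_(i < N) c i * c i)%:~R).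
Proof.
rewrite /zcomb rmorph_sum mulr_suml rmorph_sum -sumrB; apply: zspan_sum => i _.
rewrite mulr_sumr (bigD1 i) //= rmorphMz mulrzAl mulrzAr -mulrzA rmorphXn /=.
rewrite -exprMn z_mul_conj expr1n addrAC subrr add0r; apply: zspan_sum => l l_neq_i.
rewrite rmorphMz rmorphXn /= conj_z mulrzAl mulrzAr -exprM -exprD.
apply: zspanMz; apply: zspanMz; apply: zspan_expr.
by rewrite /= exponent_conj_prod_neq0 // eq_sym.
Qed.

Lemma zspan_zcomb (P : pred nat) (c : nat -> int) :
  (forall i : 'I_N, ~~ P i -> c i = 0) -> zspan P (zcomb c).
Proof.
move=> Pc; exists (fun i => if P i then c i else 0) => [i /negbTE -> //|].
by apply: eq_bigr => i _; case: ifP => // /negbT /Pc ->.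
Qed.

(* w w^* = 1 forces the squares of the coefficients of w to sum to 1, so
   w = +-z^i. *)
Lemma zint_norm1_parity w : zint w -> w * w^* = 1 ->
  zspan (fun i => ~~ odd i) w \/ zspan odd w.
Proof.
move=> [c _ ->] Enorm; set t := \sum_(i < N) c i * c i.
have t1 : t = 1.
  have t1_span : zspan (pred1 0%N) (t - 1)%:~R by apply: zspan_int.
  have Esum : (t - 1)%:~R + (zcomb c * (zcomb c)^* - t%:~R) = 0 :> algC.
    by rewrite Enorm intrB; ring.
  have /eqP : (t - 1)%:~R = 0 :> algC.
    by apply: zspan_disjoint_eq0 t1_span (zcomb_norm_sub c) Esum => i /= /eqP ->.
  by rewrite intr_eq0 subr_eq0 => /eqP.
have sqr_sum0 (Q : pred 'I_N) :
    \sum_(i < N | Q i) c i * c i = 0 -> forall i : 'I_N, Q i -> c i = 0.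
  move=> Q0 i Qi; apply/eqP; rewrite -[_ == _]orbb -mulf_eq0; apply/eqP.
  by apply: (psumr_eq0P _ Q0) => // l _; rewrite -expr2 sqr_ge0.
have sqr_sum_ge0 (Q : pred 'I_N) : 0 <= \sum_(i < N | Q i) c i * c i.
  by apply: sumr_ge0 => i _; rewrite -expr2 sqr_ge0.
move: t1; rewrite /t (bigID (fun i : 'I_N => odd i)) /=.
have := sqr_sum_ge0 (fun i : 'I_N => odd i).
have := sqr_sum_ge0 (fun i : 'I_N => ~~ odd i).
set Se := \sum_(i < N | ~~ odd i) _; set So := \sum_(i < N | odd i) _.
move=> Se_ge0 So_ge0 Eodd; have [So0 | Se0] : So = 0 \/ Se = 0 by lia.
  by left; apply: zspan_zcomb => i /negbNE; apply: (sqr_sum0 _ So0).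
by right; apply: zspan_zcomb; apply: (sqr_sum0 _ Se0).
Qed.

Lemma even_odd_norm_4X_eq0 e x y :
  zspan (fun i => ~~ odd i) x -> zspan odd y -> (x + y) * (x + y)^* = 4 ^+ e ->
  x = 0 \/ y = 0.
Proof.
move=> x_even y_odd Enorm.
have xy_int : zint (x + y).
  by apply: zspanD; [apply: zspanW x_even | apply: zspanW y_odd].
have [w w_int [Exy w_unit]] := norm_eq_4X xy_int Enorm.
have Ew P : zspan P w -> zspan P (2 ^+ e * w).
  by move=> Pw; rewrite -natrX mulr_natl pmulrn; apply: zspanMz.
have [/Ew w_even | /Ew w_odd] := zint_norm1_parity w_int w_unit.
  right; apply: (zspan_disjoint_eq0 _ y_odd (zspanB x_even w_even)).
    by move=> i ->.
  by rewrite -Exy; ring.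
left; apply: (zspan_disjoint_eq0 _ x_even (zspanB y_odd w_odd)).
  by move=> i /negbTE ->.
by rewrite -Exy; ring.
Qed.

End TwoPowerCyclotomicIntegers.

(** * Splitting Walsh transforms along g *)

Definition WH_on n q (h : BV n -> 'I_q) (D : pred (BV n)) (u : BV n) : algC :=
  \sum_(x | D x) zeta q ^+ h x * (-1) ^+ dotF2 u x.

Section WalshSplit.

Variables (n j : nat) (g : BV n -> bool) (h : BV n -> 'I_(2 ^ j.+1)).

Local Notation zeta_k := (zeta (2 ^ j.+2)).
Local Notation S0 := (WH_on h [pred x | ~~ g x]).
Local Notation S1 := (WH_on h g).

Lemma WH_split u : WH h u = S0 u + S1 u.
Proof. by rewrite /WH /WH_on (bigID g) /= addrC. Qed.

Lemma WH_split_shift (hg : BV n -> 'I_(2 ^ j.+1)) :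
  (forall x, val (hg x) = (h x + 2 ^ j * g x) %% 2 ^ j.+1)%N ->
  forall u, WH hg u = S0 u - S1 u.
Proof.
move=> Hhg u.
have Ehg x : zeta (2 ^ j.+1) ^+ hg x = zeta (2 ^ j.+1) ^+ h x * (-1) ^+ g x.
  by rewrite Hhg zeta_pow2_mod exprD exprM zeta_pow2_half.
rewrite /WH /WH_on (bigID g) /= addrC -sumrN; congr (_ + _); apply: eq_bigr => x gx.
  by rewrite Ehg (negbTE gx) mulr1.
by rewrite Ehg gx mulrN1 mulNr.
Qed.

Lemma WH_split_twist (f : BV n -> 'I_(2 ^ j.+2)) :
  (forall x, val (f x) = (g x + 2 * h x) %% 2 ^ j.+2)%N ->
  forall u, WH f u = S0 u + zeta_k * S1 u.
Proof.
move=> Hf u.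
have Ef x : zeta_k ^+ f x = zeta_k ^+ g x * zeta (2 ^ j.+1) ^+ h x.
  by rewrite Hf zeta_pow2_mod exprD exprM sqr_zeta_pow2.
rewrite /WH /WH_on (bigID g) /= addrC mulr_sumr; congr (_ + _); apply: eq_bigr => x gx.
  by rewrite Ef (negbTE gx) mul1r.
by rewrite Ef gx mulrA.
Qed.

Lemma WH_on_even D u : zspan j zeta_k (fun i => ~~ odd i) (WH_on h D u).
Proof.
apply: zspan_sum => x _; apply: zspanMsign; rewrite -(sqr_zeta_pow2 j) -exprM.
by apply: zspanW (zspan_expr_parity (zeta_pow2_prim _) _) => i /eqP->; rewrite oddM.
Qed.

Lemma WH_on_odd D u : zspan j zeta_k odd (zeta_k * WH_on h D u).
Proof.
rewrite mulr_sumr; apply: zspan_sum => x _; rewrite mulrA; apply: zspanMsign.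
rewrite -(sqr_zeta_pow2 j) -exprM -exprS.
by apply: zspanW (zspan_expr_parity (zeta_pow2_prim _) _) => i /eqP->; rewrite /= oddM.
Qed.

Lemma WH_on_parts_eq0 u : ~~ odd n ->
  `|S0 u + zeta_k * S1 u| = sqrtC (2 ^+ n) -> S0 u = 0 \/ S1 u = 0.
Proof.
move=> n_even norm_twist.
have Enorm : (S0 u + zeta_k * S1 u) * (S0 u + zeta_k * S1 u)^* = 4 ^+ n./2.
  rewrite -normCK norm_twist sqrtCK (_ : 4 = 2 ^+ 2) -?exprM ?mul2n ?even_halfK //.
  by rewrite -natrX.
have [S0_0 | /eqP] := even_odd_norm_4X_eq0 (zeta_pow2_prim j.+1)
                        (WH_on_even _ u) (WH_on_odd _ u) Enorm; first by left.
by rewrite mulf_eq0 (negbTE (z_neq0 (zeta_pow2_prim j.+1))) => /eqP; right.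
Qed.

End WalshSplit.

Theorem mainTheorem14 (n k : nat) (hk : (2 <= k)%N)
  (g : BV n -> bool) (h : BV n -> 'I_(2 ^ k.-1))
  (f : BV n -> 'I_(2 ^ k)) (hg : BV n -> 'I_(2 ^ k.-1))
  (Hf : forall x, val (f x) = ((g x + 2 * h x) %% 2 ^ k)%N)
  (Hhg : forall x, val (hg x) = ((h x + 2 ^ (k - 2) * g x) %% 2 ^ k.-1)%N) :
  let cond_i := gbent f in
  let cond_ii := gbent h /\ gbent hg /\
      (forall u : BV n, 'Im ((WH h u)^* * WH hg u) = 0) in
  (~~ odd n -> (cond_i <-> cond_ii)) /\ (odd n -> cond_ii -> cond_i).
Proof.
case: k hk h f hg Hf Hhg => [|[|j]] // _ h f hg Hf Hhg cond_i cond_ii.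
have {}Hhg x : val (hg x) = ((h x + 2 ^ j * g x) %% 2 ^ j.+1)%N by rewrite Hhg subn2.
have norm_zeta := norm_z (zeta_pow2_prim j.+1).
have Eh := WH_split g h; have Ehg := WH_split_shift Hhg; have Ef := WH_split_twist Hf.
set S0 := WH_on h _ in Eh Ehg Ef; set S1 := WH_on h g in Eh Ehg Ef.
have ii_to_i : cond_ii -> cond_i.
  move=> [bent_h [bent_hg Im0]] u.
  have S01 : S0 u = 0 \/ S1 u = 0.
    by apply/sum_diff_orthogonalP; rewrite -Eh -Ehg bent_h bent_hg Im0.
  by rewrite Ef norm_add_unit_mul // -Eh.
split=> [n_even | _]; last exact: ii_to_i.
split=> // bent_f.
have S01 u : S0 u = 0 \/ S1 u = 0 by apply: WH_on_parts_eq0; rewrite // -Ef bent_f.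
have bent_h : gbent h.
  by move=> u; rewrite Eh -(norm_add_unit_mul norm_zeta (S01 u)) -Ef bent_f.
have orth u := (sum_diff_orthogonalP (S0 u) (S1 u)).2 (S01 u).
split=> //; split=> u; have [norm_sum_diff Im0] := orth u.
  by rewrite Ehg -norm_sum_diff -Eh bent_h.
by rewrite Eh Ehg.
Qed.
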